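(* Let $\mathfrak A$ and $\mathcal A$ be Banach algebras with $\mathcal A$ a commutative Banach $\mathfrak A$-bimodule with compatible actions, and let $X,Y$ be commutative Banach $\mathcal A$-$\mathfrak A$-modules, regarded as left Banach $\mathcal A\widehat\otimes_{\mathfrak A}\mathcal A^{op}$-modules via $(a\otimes b)\cdot x=a\cdot x\cdot b$. (i) If $\phi:X\to Y$ is a bounded $\mathcal A$-$\mathfrak A$-module homomorphism, then $\phi$ is a left $\mathcal A\widehat\otimes_{\mathfrak A}\mathcal A^{op}$-$\mathfrak A$-module homomorphism. (ii) If $Y$ is an essential $\mathcal A$-bimodule and $\varphi:X^*\to Y^*$ is a bounded right $\mathcal A\widehat\otimes_{\mathfrak A}\mathcal A^{op}$-$\mathfrak A$-module homomorphism, then $\varphi$ is an $\mathcal A$-$\mathfrak A$-module homomorphism.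
   Context: Compatible actions: $\alpha\cdot(ab)=(\alpha\cdot a)b$, $(ab)\cdot\alpha=a(b\cdot\alpha)$; commutative means $\alpha\cdot a=a\cdot\alpha$. A Banach $\mathcal A$-$\mathfrak A$-module is a Banach space $X$ which is a Banach $\mathcal A$-bimodule and $\mathfrak A$-bimodule with $\alpha\cdot(a\cdot x)=(\alpha\cdot a)\cdot x$, $a\cdot(\alpha\cdot x)=(a\cdot\alpha)\cdot x$, $a\cdot(x\cdot\alpha)=(a\cdot x)\cdot\alpha$ and analogous right identities; commutative if $\alpha\cdot x=x\cdot\alpha$; $X^*$ has the dual actions. $\mathcal A^{op}$ is $\mathcal A$ with reversed product; $\mathcal A\widehat\otimes_{\mathfrak A}\mathcal A^{op}=(\mathcal A\widehat\otimes\mathcal A)/I$, $I$ the closed span of $a\cdot\alpha\otimes b-a\otimes\alpha\cdot b$, is a Banach algebra with $(a\otimes b)(c\otimes d)=ac\otimes db$ and an $\mathfrak A$-bimodule via $\alpha\cdot(a\otimes b)=(\alpha\cdot a)\otimes b$, $(a\otimes b)\cdot\alpha=a\otimes(b\cdot\alpha)$; the action $(a\otimes b)\cdot x=a\cdot x\cdot b$ is well defined on it. $X^*$ is a right $\mathcal A\widehat\otimes_{\mathfrak A}\mathcal A^{op}$-module via $\langle x,f\cdot m\rangle=\langle m\cdot x,f\rangle$. An $\mathcal A$-$\mathfrak A$-module homomorphism is a map that is both an $\mathcal A$-bimodule and an $\mathfrak A$-bimodule homomorphism; a left (right) $\mathcal A\widehat\otimes_{\mathfrak A}\mathcal A^{op}$-$\mathfrak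 A$-module homomorphism is one that is a left (right) $\mathcal A\widehat\otimes_{\mathfrak A}\mathcal A^{op}$-module homomorphism and an $\mathfrak A$-bimodule homomorphism. $Y$ is an essential $\mathcal A$-bimodule if $\mathrm{span}\{a\cdot y\cdot b\}$ is dense in $Y$. *)

From HB Require Import structures.
From mathcomp Require Import all_boot all_order all_algebra.
From mathcomp Require Import all_classical all_reals all_analysis.
Set Implicit Arguments. Unset Strict Implicit. Unset Printing Implicit Defensive.
Import Order.TTheory GRing.Theory Num.Theory.
Import numFieldNormedType.Exports.
Local Open Scope classical_set_scope.
Local Open Scope ring_scope.

Section BanachDefs.
Variable K : numFieldType.

Definition bilin (U V W : normedModType K) (f : U -> V -> W) : Prop :=
  (forall (k : K) u u' v, f (k *: u + u') v = k *: f u v + f u' v) /\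
  (forall (k : K) u v v', f u (k *: v + v') = k *: f u v + f u v').

Definition banach_algebra (B : completeNormedModType K) (mul : B -> B -> B) : Prop :=
  [/\ bilin mul,
      (forall a b c, mul a (mul b c) = mul (mul a b) c) &
      (forall a b, `|mul a b| <= `|a| * `|b|)].

(* Banach B-bimodule structure on a Banach space M, with left action l
   (b . m = l b m) and right action r (m . b = r m b). *)
Definition banach_bimodule (B : completeNormedModType K) (mul : B -> B -> B)
  (M : completeNormedModType K) (l : B -> M -> M) (r : M -> B -> M) : Prop :=
  [/\ bilin l, bilin r,
      (forall b c m, l (mul b c) m = l b (l c m)),
      (forall b c m, r m (mul b c) = r (r m b) c) &
      (forall b c m, l b (r m c) = r (l b m) c)] /\
  (forall b m, `|l b m| <= `|b| * `|m|) /\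
  (forall b m, `|r m b| <= `|m| * `|b|).

Definition compatible_actions (A AA : completeNormedModType K)
  (mA : A -> A -> A) (lAA : AA -> A -> A) (rAA : A -> AA -> A) : Prop :=
  (forall al a b, lAA al (mA a b) = mA (lAA al a) b) /\
  (forall al a b, rAA (mA a b) al = mA a (rAA b al)).

Definition banach_A_AA_module (A AA : completeNormedModType K)
  (mA : A -> A -> A) (mAA : AA -> AA -> AA)
  (lAA : AA -> A -> A) (rAA : A -> AA -> A)
  (X : completeNormedModType K)
  (laX : A -> X -> X) (raX : X -> A -> X)
  (lAX : AA -> X -> X) (rAX : X -> AA -> X) : Prop :=
  banach_bimodule mA laX raX /\ banach_bimodule mAA lAX rAX /\
  [/\ (forall al a x, lAX al (laX a x) = laX (lAA al a) x),
      (forall al a x, laX a (lAX al x) = laX (rAA a al) x) &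
      (forall al a x, laX a (rAX x al) = rAX (laX a x) al)] /\
  [/\ (forall al a x, rAX (raX x a) al = raX x (rAA a al)),
      (forall al a x, raX (rAX x al) a = raX x (lAA al a)) &
      (forall al a x, raX (lAX al x) a = lAX al (raX x a))].

(* An element of the completed projective tensor product, hence of its
   quotient A (x)^_AA A^op, is represented by sum_n a_n (x) b_n with
   sum_n ||a_n|| ||b_n|| < oo. *)
Definition abs_summable_pairs (A : completeNormedModType K) (a b : nat -> A) : Prop :=
  cvgn (series (fun n => `|a n| * `|b n|)).

Definition tens_act (A X : completeNormedModType K)
  (laX : A -> X -> X) (raX : X -> A -> X) (a b : nat -> A) (x : X) : X :=
  limn (series (fun n => laX (a n) (raX x (b n)))).

Definition bounded_linear (X Y : normedModType K) (phi : X -> Y) : Prop :=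
  (forall (k : K) x x', phi (k *: x + x') = k *: phi x + phi x') /\
  (exists C : K, forall x, `|phi x| <= C * `|x|).

(* Elements of the dual space X^* : bounded linear functionals X -> K *)
Definition dual_elt (X : normedModType K) (f : X -> K) : Prop :=
  (forall (k : K) x x', f (k *: x + x') = k * f x + f x') /\
  (exists M : K, forall x, `|f x| <= M * `|x|).

Definition dual_l (B X : Type) (r : X -> B -> X) (b : B) (f : X -> K) : X -> K :=
  fun x => f (r x b).
Definition dual_r (B X : Type) (l : B -> X -> X) (f : X -> K) (b : B) : X -> K :=
  fun x => f (l b x).

Definition dual_tens_act (A X : completeNormedModType K)
  (laX : A -> X -> X) (raX : X -> A -> X) (f : X -> K) (a b : nat -> A) : X -> K :=
  fun x => f (tens_act laX raX a b x).

(* Bounded linear map X^* -> Y^* (phi is only relevant on X^* ):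
   maps X^* into Y^*, is linear on X^*, and ||phi f|| <= C ||f||
   (operator norms written out). *)
Definition bounded_linear_dual (X Y : normedModType K)
  (phi : (X -> K) -> (Y -> K)) : Prop :=
  [/\ (forall f, dual_elt f -> dual_elt (phi f)),
      (forall (k : K) f g, dual_elt f -> dual_elt g ->
          forall y, phi (fun x => k * f x + g x) y = k * phi f y + phi g y) &
      (exists C : K, forall f (M : K), dual_elt f -> 0 <= M ->
          (forall x, `|f x| <= M * `|x|) -> forall y, `|phi f y| <= C * M * `|y|)].

Definition essential_bimodule (A Y : completeNormedModType K)
  (laY : A -> Y -> Y) (raY : Y -> A -> Y) : Prop :=
  closure [set y | exists s : seq (K * A * Y * A),
             y = \sum_(t <- s) t.1.1.1 *: laY t.1.1.2 (raY t.1.2 t.2)] = [set: Y].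

End BanachDefs.

From HB Require Import structures.
From mathcomp Require Import all_boot all_order all_algebra.
From mathcomp Require Import all_classical all_reals all_analysis.
Import Order.TTheory GRing.Theory Num.Theory.
Import numFieldNormedType.Exports.
Local Open Scope classical_set_scope.
Local Open Scope ring_scope.

(* (i) A bounded module map is continuous, so it commutes with the convergent
   series defining (sum_n a_n (x) b_n) . x.
   (ii) Testing the tensor relation on one-term tensors c (x) d gives
   psi f (c.y.d) = psi (f (c . _ . d)) y; with the bimodule associativity this
   shows that psi (f.a) and (psi f).a, resp. psi (a.f) and a.(psi f), agree on
   every c.y.d, hence everywhere since such elements span a dense subspace of
   Y and both sides are bounded functionals. *)

Set Implicit Arguments. Unset Strict Implicit.

Section BoundedMaps.
Variable K : numFieldType.

Lemma morph_add0 (U V : zmodType) (f : U -> V) : {morph f : x y / x + y} -> f 0 = 0.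
Proof.
by move=> fD; have := fD 0 0; rewrite addr0 => /(congr1 (fun z => z - f 0)); rewrite addrK subrr.
Qed.

Lemma morph_addB (U V : zmodType) (f : U -> V) :
  {morph f : x y / x + y} -> {morph f : x y / x - y}.
Proof. by move=> fD x y; apply: (addIr (f y)); rewrite -fD !subrK. Qed.

Lemma linear_morph_add (U V : normedModType K) (f : U -> V) :
  (forall (k : K) x x', f (k *: x + x') = k *: f x + f x') -> {morph f : x y / x + y}.
Proof. by move=> fL x y; have := fL 1 x y; rewrite !scale1r. Qed.

Lemma bilin_l0 (A X : normedModType K) (l : A -> X -> X) : bilin l -> forall x, l 0 x = 0.
Proof.
by move=> [lL _] x; apply: (morph_add0 (f := l^~ x)); apply: linear_morph_add => k a b; apply: lL.
Qed.

Lemma dual_elt_add (U : normedModType K) (f : U -> K) : dual_elt f -> {morph f : x y / x + y}.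
Proof. by move=> [fL _] x y; have := fL 1 x y; rewrite scale1r mul1r. Qed.

Lemma dual_elt_scale (U : normedModType K) (f : U -> K) :
  dual_elt f -> forall k x, f (k *: x) = k * f x.
Proof.
by move=> hf k x; rewrite -[k *: x]addr0 hf.1 (morph_add0 (dual_elt_add hf)) addr0.
Qed.

(* A bounding constant in a numFieldType need not be real; [`|C| + 1] is. *)
Lemma bound_gt0 (U : normedModType K) (V : normedZmodType K) (f : U -> V) :
  (exists C : K, forall x, `|f x| <= C * `|x|) ->
  exists2 C : K, 0 < C & forall x, `|f x| <= C * `|x|.
Proof.
move=> [C hC]; exists (`|C| + 1) => [|x]; first by rewrite ltr_wpDl.
have Cx0 : 0 <= C * `|x| by apply: le_trans (hC x).
apply: le_trans (hC x) _.
by rewrite -[C * _]ger0_norm // normrM normr_id ler_wpM2r // lerDl.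
Qed.

Lemma dual_eltB (U : normedModType K) (f g : U -> K) :
  dual_elt f -> dual_elt g -> dual_elt (fun x => f x - g x).
Proof.
move=> hf hg; split.
  move=> k x x'; rewrite (dual_elt_add hf) (dual_elt_add hg).
  by rewrite !(dual_elt_scale hf, dual_elt_scale hg) mulrBr addrACA opprD.
have [M _ hM] := bound_gt0 hf.2; have [N _ hN] := bound_gt0 hg.2.
by exists (M + N) => x; rewrite mulrDl (le_trans (ler_normB _ _)) // lerD.
Qed.

Lemma dual_elt_comp (U : normedModType K) (f : U -> K) (T : U -> U) :
  dual_elt f -> (forall k x x', T (k *: x + x') = k *: T x + T x') ->
  (exists N : K, forall x, `|T x| <= N * `|x|) -> dual_elt (fun x => f (T x)).
Proof.
move=> hf TL hT; split; first by move=> k x x'; rewrite TL hf.1.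
have [M M0 hM] := bound_gt0 hf.2; have [N _ hN] := bound_gt0 hT.
by exists (M * N) => x; rewrite -mulrA (le_trans (hM _)) // ler_wpM2l ?(ltW M0).
Qed.

Lemma bounded_linear_limn (X Y : completeNormedModType K) (phi : X -> Y) (s : nat -> X) :
  bounded_linear phi -> cvgn s -> limn (phi \o s) = phi (limn s).
Proof.
move=> [phiL hphi] s_cvg; apply: cvg_lim => //.
have [C C0 hC] := bound_gt0 hphi.
apply/cvgrPdist_lt => e e0.
move/cvgrPdist_lt: s_cvg => /(_ (e / C) (divr_gt0 e0 C0)); apply: filterS => n hn /=.
rewrite -(morph_addB (linear_morph_add phiL)) (le_lt_trans (hC _)) //.
by rewrite -ltr_pdivlMl // mulrC.
Qed.

Lemma bounded_linear_series (X Y : normedModType K) (phi : X -> Y) (s : nat -> X) :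
  bounded_linear phi -> series (phi \o s) = phi \o series s.
Proof.
move=> [phiL _]; have phiD := linear_morph_add phiL.
by apply: funext => n /=; rewrite /series /= (big_morph phi phiD (morph_add0 phiD)).
Qed.

End BoundedMaps.

Section TensorAction.
Variables (K : numFieldType) (A X : completeNormedModType K).
Variables (la : A -> X -> X) (ra : X -> A -> X).

Definition single_seq (c : A) : nat -> A := fun n => if n is 0%N then c else 0.

Lemma series_single (V : normedModType K) (w : nat -> V) :
  (forall n, w n.+1 = 0) -> series w @ \oo --> w 0%N.
Proof.
move=> w0; apply: cvg_near_cst; exists 1%N => // -[|n] //= _.
by rewrite /series /= big_nat_recl //= big1 ?addr0.
Qed.

Lemma abs_summable_single (c d : A) : abs_summable_pairs (single_seq c) (single_seq d).
Proof.
apply: (cvgP (`|c| * `|d|)).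
by apply: (series_single (w := fun n => `|single_seq c n| * `|single_seq d n|)) => n;
  rewrite normr0 mul0r.
Qed.

Lemma tens_act_single (c d : A) x :
  bilin la -> tens_act la ra (single_seq c) (single_seq d) x = la c (ra x d).
Proof. by move=> hl; apply: cvg_lim => //; apply: series_single => n; apply: bilin_l0. Qed.

(* The partial sums are Cauchy: ||a_k . x . b_k|| <= ||x|| ||a_k|| ||b_k||. *)
Lemma tens_act_cvg (a b : nat -> A) x :
  (forall c y, `|la c y| <= `|c| * `|y|) -> (forall c y, `|ra y c| <= `|y| * `|c|) ->
  abs_summable_pairs a b -> cvgn (series (fun n => la (a n) (ra x (b n)))).
Proof.
move=> hl hr hab.
have x0 : 0 < `|x| + 1 by rewrite ltr_wpDl.
apply/cauchy_cvgP/cauchy_seriesP => e e0.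
have := (cauchy_seriesP _).1 (@cvg_cauchy _ _ _ hab) _ (divr_gt0 e0 x0).
move=> /(_ _) /filterS; apply=> -[m n] /= hmn.
apply: le_lt_trans (ler_norm_sum _ _ _) _.
apply: (@le_lt_trans _ _ ((`|x| + 1) * \sum_(m <= k < n) `|a k| * `|b k|)).
  rewrite mulr_sumr; apply: ler_sum => k _; apply: le_trans (hl _ _) _.
  by rewrite mulrCA ler_wpM2l // (le_trans (hr _ _)) // ler_wpM2r // lerDl ler01.
rewrite mulrC -ltr_pdivlMr //; apply: le_lt_trans hmn.
by rewrite ger0_norm // sumr_ge0 // => k _; rewrite mulr_ge0.
Qed.

End TensorAction.

Lemma bounded_hom_tens_act (K : numFieldType) (A X Y : completeNormedModType K)
    (mA : A -> A -> A) (laX : A -> X -> X) (raX : X -> A -> X)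
    (laY : A -> Y -> Y) (raY : Y -> A -> Y) (phi : X -> Y) :
  banach_bimodule mA laX raX -> bounded_linear phi ->
  (forall a x, phi (laX a x) = laY a (phi x)) -> (forall a x, phi (raX x a) = raY (phi x) a) ->
  forall a b : nat -> A, abs_summable_pairs a b ->
  forall x, phi (tens_act laX raX a b x) = tens_act laY raY a b (phi x).
Proof.
move=> [_ [hl hr]] hphi phil phir a b hab x; rewrite /tens_act.
have -> : (fun n => laY (a n) (raY (phi x) (b n))) = phi \o (fun n => laX (a n) (raX x (b n))).
  by apply: funext => n /=; rewrite phil phir.
by rewrite bounded_linear_series // bounded_linear_limn //; exact: tens_act_cvg hl hr hab.
Qed.

Section EssentialDual.
Variables (K : numFieldType) (A Y : completeNormedModType K).
Variables (laY : A -> Y -> Y) (raY : Y -> A -> Y).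
Hypothesis essY : essential_bimodule laY raY.

Lemma essential_dual_eq0 (F : Y -> K) : dual_elt F ->
  (forall c y d, F (laY c (raY y d)) = 0) -> forall y, F y = 0.
Proof.
move=> hF Fgen y; have FD := dual_elt_add hF.
have [M M0 hM] := bound_gt0 hF.2.
have Fspan (s : seq (K * A * Y * A)) :
    F (\sum_(t <- s) t.1.1.1 *: laY t.1.1.2 (raY t.1.2 t.2)) = 0.
  elim: s => [|t s IHs]; first by rewrite big_nil (morph_add0 FD).
  by rewrite big_cons FD dual_elt_scale // Fgen IHs mulr0 addr0.
apply/eqP; apply: contraT; rewrite -normr_gt0 => Fy0.
have : closure [set y | exists s : seq (K * A * Y * A),
    y = \sum_(t <- s) t.1.1.1 *: laY t.1.1.2 (raY t.1.2 t.2)] y by rewrite essY.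
move=> /(_ _ (@nbhsx_ballx _ _ y _ (divr_gt0 Fy0 M0))) [_ [[s ->]]].
rewrite -ball_normE /ball_ /= -(ltr_pM2l M0) mulrCA divff ?gt_eqF // mulr1.
by move/lt_geF; rewrite -[F y]subr0 -(Fspan s) -(morph_addB FD) hM.
Qed.

Lemma essential_dual_eq (G1 G2 : Y -> K) : dual_elt G1 -> dual_elt G2 ->
  (forall c y d, G1 (laY c (raY y d)) = G2 (laY c (raY y d))) -> G1 =1 G2.
Proof.
move=> hG1 hG2 G12 y; apply/eqP; rewrite -subr_eq0; apply/eqP.
by apply: (essential_dual_eq0 (dual_eltB hG1 hG2)) => c u d; rewrite G12 subrr.
Qed.

End EssentialDual.

Section BimoduleDual.
Variables (K : numFieldType) (A M : completeNormedModType K) (mA : A -> A -> A).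
Variables (l : A -> M -> M) (r : M -> A -> M).
Hypothesis hM : banach_bimodule mA l r.

Lemma dual_elt_dual_l (a : A) (f : M -> K) : dual_elt f -> dual_elt (dual_l r a f).
Proof.
have [[_ [rL _] _ _ _] [_ hr]] := hM.
by move=> hf; apply: dual_elt_comp => //; exists `|a| => x; rewrite mulrC.
Qed.

Lemma dual_elt_dual_r (a : A) (f : M -> K) : dual_elt f -> dual_elt (dual_r l f a).
Proof.
have [[[_ lL] _ _ _ _] [hl _]] := hM.
by move=> hf; apply: dual_elt_comp => //; exists `|a|.
Qed.

Lemma dual_elt_sandwich (c d : A) (f : M -> K) :
  dual_elt f -> dual_elt (fun x => f (l c (r x d))).
Proof.
have [[[_ lL] [rL _] _ _ _] [hl hr]] := hM.
move=> hf; apply: dual_elt_comp => // [k x x'|]; first by rewrite rL lL.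
exists (`|c| * `|d|) => x; rewrite (le_trans (hl _ _)) // -mulrA ler_wpM2l //.
by rewrite mulrC hr.
Qed.

End BimoduleDual.

Section DualModuleHom.
Variables (K : numFieldType) (A X Y : completeNormedModType K) (mA : A -> A -> A).
Variables (laX : A -> X -> X) (raX : X -> A -> X) (laY : A -> Y -> Y) (raY : Y -> A -> Y).
Hypotheses (hX : banach_bimodule mA laX raX) (hY : banach_bimodule mA laY raY).
Hypothesis essY : essential_bimodule laY raY.
Variable psi : (X -> K) -> (Y -> K).
Hypothesis psi_dual : forall f, dual_elt f -> dual_elt (psi f).
Hypothesis psi_tens : forall a b : nat -> A, abs_summable_pairs a b ->
  forall f, dual_elt f -> forall y,
    psi (dual_tens_act laX raX f a b) y = dual_tens_act laY raY (psi f) a b y.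

Lemma dual_hom_sandwich (f : X -> K) c d y : dual_elt f ->
  psi f (laY c (raY y d)) = psi (fun x => f (laX c (raX x d))) y.
Proof.
have [[lX _ _ _ _] _] := hX; have [[lY _ _ _ _] _] := hY.
move=> hf; have := psi_tens (abs_summable_single (c := c) (d := d)) hf y.
rewrite /dual_tens_act tens_act_single // => <-; congr psi.
by apply: funext => x; rewrite tens_act_single.
Qed.

Lemma dual_hom_dual_l (a : A) (f : X -> K) : dual_elt f ->
  psi (dual_l raX a f) =1 dual_l raY a (psi f).
Proof.
have [[_ _ _ rXM lrX] _] := hX; have [[_ _ _ rYM lrY] _] := hY.
move=> hf; apply: (essential_dual_eq essY).
- by apply/psi_dual/(dual_elt_dual_l hX).
- by apply/(dual_elt_dual_l hY)/psi_dual.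
move=> c u d; rewrite dual_hom_sandwich; last exact: (dual_elt_dual_l hX).
rewrite /dual_l -lrY -rYM dual_hom_sandwich //; congr psi.
by apply: funext => x; rewrite -lrX -rXM.
Qed.

Lemma dual_hom_dual_r (a : A) (f : X -> K) : dual_elt f ->
  psi (dual_r laX f a) =1 dual_r laY (psi f) a.
Proof.
have [[_ _ lXM _ _] _] := hX; have [[_ _ lYM _ _] _] := hY.
move=> hf; apply: (essential_dual_eq essY).
- by apply/psi_dual/(dual_elt_dual_r hX).
- by apply/(dual_elt_dual_r hY)/psi_dual.
move=> c u d; rewrite dual_hom_sandwich; last exact: (dual_elt_dual_r hX).
rewrite /dual_r -lYM dual_hom_sandwich //; congr psi.
by apply: funext => x; rewrite -lXM.
Qed.

End DualModuleHom.
Theorem proposition4p1 (K : numFieldType)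
  (AA A : completeNormedModType K)
  (mAA : AA -> AA -> AA) (mA : A -> A -> A)
  (lAA : AA -> A -> A) (rAA : A -> AA -> A)
  (hAA : banach_algebra mAA) (hA : banach_algebra mA)
  (hAbimod : banach_bimodule mAA lAA rAA)
  (hcompat : compatible_actions mA lAA rAA)
  (hAcomm : forall al a, lAA al a = rAA a al)
  (X Y : completeNormedModType K)
  (laX : A -> X -> X) (raX : X -> A -> X)
  (lAX : AA -> X -> X) (rAX : X -> AA -> X)
  (laY : A -> Y -> Y) (raY : Y -> A -> Y)
  (lAY : AA -> Y -> Y) (rAY : Y -> AA -> Y)
  (hX : banach_A_AA_module mA mAA lAA rAA laX raX lAX rAX)
  (hXcomm : forall al x, lAX al x = rAX x al)
  (hY : banach_A_AA_module mA mAA lAA rAA laY raY lAY rAY)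
  (hYcomm : forall al y, lAY al y = rAY y al) :
  (* (i) *)
  (forall phi : X -> Y, bounded_linear phi ->
     (forall a x, phi (laX a x) = laY a (phi x)) ->
     (forall a x, phi (raX x a) = raY (phi x) a) ->
     (forall al x, phi (lAX al x) = lAY al (phi x)) ->
     (forall al x, phi (rAX x al) = rAY (phi x) al) ->
     (forall a b : nat -> A, abs_summable_pairs a b ->
        forall x, phi (tens_act laX raX a b x) = tens_act laY raY a b (phi x)) /\
     (forall al x, phi (lAX al x) = lAY al (phi x)) /\
     (forall al x, phi (rAX x al) = rAY (phi x) al)) /\
  (* (ii) *)
  (essential_bimodule laY raY ->
   forall psi : (X -> K) -> (Y -> K), bounded_linear_dual psi ->
     (forall a b : nat -> A, abs_summable_pairs a b ->
        forall f, dual_elt f -> forall y,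
          psi (dual_tens_act laX raX f a b) y = dual_tens_act laY raY (psi f) a b y) ->
     (forall al f, dual_elt f -> forall y,
          psi (dual_l rAX al f) y = dual_l rAY al (psi f) y) ->
     (forall al f, dual_elt f -> forall y,
          psi (dual_r lAX f al) y = dual_r lAY (psi f) al y) ->
     (forall a f, dual_elt f -> forall y,
          psi (dual_l raX a f) y = dual_l raY a (psi f) y) /\
     (forall a f, dual_elt f -> forall y,
          psi (dual_r laX f a) y = dual_r laY (psi f) a y) /\
     (forall al f, dual_elt f -> forall y,
          psi (dual_l rAX al f) y = dual_l rAY al (psi f) y) /\
     (forall al f, dual_elt f -> forall y,
          psi (dual_r lAX f al) y = dual_r lAY (psi f) al y)).
Proof.
have [[hXA _] [hYA _]] := (hX, hY).
split.
  move=> phi hphi phil phir phiAl phiAr; split; last by split.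
  exact: bounded_hom_tens_act hXA hphi phil phir.
move=> essY psi [psi_dual _ _] psi_tens psiAl psiAr; split; last split; last by split.
- by move=> a f hf; apply: (dual_hom_dual_l hXA hYA essY psi_dual psi_tens).
- by move=> a f hf; apply: (dual_hom_dual_r hXA hYA essY psi_dual psi_tens).
Qed.
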